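(* Let $\mathbb{F}$, $\mathfrak g$, $\mathcal C$, $\mathcal C^{du}$, $M$ be as in the context, let $V$ be an object of $\mathcal C$. Then every $\mathfrak g$-invariant subspace $U$ of $V$ is $M$-invariant, i.e. $m_VU\subseteq U$ for all $m\in M$.
   Context: Let $\mathbb F$ be a field of characteristic $0$ and $\mathfrak g$ a Lie algebra over $\mathbb F$. $\mathcal C$: full subcategory of the category of $\mathfrak g$-modules, closed under isomorphism and submodules, containing a direct sum and a tensor product of any two objects and a one-dimensional trivial module, and such that only $0\in\mathfrak g$ acts as zero on all objects. $x_V$ = action of $x$ on $V$. Category of duals $\mathcal C^{du}$: for each object a point-separating subspace $V^{du}\subseteq V^*$ with $\phi\circ x_V\in V^{du}$ ($x\in\mathfrak g$, $\phi\in V^{du}$), $\psi\circ\alpha\in V^{du}$ for morphisms $\alpha:V\to W$ and $\psi\in W^{du}$, $(V\oplus W)^{du}=V^{du}\oplus W^{du}$, $V^{du}\otimes W^{du}\subseteq(V\otimes W)^{du}$. $End_{V^{du}}(V)=\{\varphi\in End(V):\phi\circ\varphi\in V^{du}\ \forall\phi\in V^{du}\}$. $Nat$: families $(m_V)_V$ over objects, $m_V\in End_{V^{du}}(V)$, with $\varphi\circ m_V=m_W\circ\varphi$ for all morphisms $\varphi:V\to W$ of $\mathcal C$. Tannaka monoid $M=\{m\in Nat:m_{V\otimes W}=m_V\otimes m_W$ for all objects $V,W$, $m_{V_0}=id_{V_0}$ for each one-dimensional trivial $V_0\}$. *)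

From HB Require Import structures.
From mathcomp Require Import all_boot all_order all_algebra.
Set Implicit Arguments. Unset Strict Implicit. Unset Printing Implicit Defensive.
Import GRing.Theory.
Local Open Scope ring_scope.

Section Defs.
Variable F : fieldType.

Definition is_lin (U W : lmodType F) (f : U -> W) : Prop :=
  forall (a : F) (x y : U), f (a *: x + y) = a *: f x + f y.

Definition is_functional (U : lmodType F) (phi : U -> F) : Prop :=
  forall (a : F) (x y : U), phi (a *: x + y) = a * phi x + phi y.

Definition is_lie_bracket (g : lmodType F) (br : g -> g -> g) : Prop :=
  [/\ forall y, is_lin (fun x => br x y),
      forall x, is_lin (br x),
      forall x, br x x = 0 &
      forall x y z, br x (br y z) + br y (br z x) + br z (br x y) = 0].

Record gModule (g : lmodType F) (br : g -> g -> g) := GModule {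
  gm_car :> lmodType F;
  gm_act : g -> gm_car -> gm_car;
  gm_act_lin_g : forall v, is_lin (fun x => gm_act x v);
  gm_act_lin_v : forall x, is_lin (gm_act x);
  gm_act_br : forall x y v,
      gm_act (br x y) v = gm_act x (gm_act y v) - gm_act y (gm_act x v)
}.

Variables (g : lmodType F) (br : g -> g -> g).
Notation gmod := (gModule br).

Definition is_hom (V W : gmod) (f : V -> W) : Prop :=
  is_lin f /\ forall (x : g) (v : V), f (gm_act x v) = gm_act x (f v).

Definition is_iso (V W : gmod) (f : V -> W) : Prop :=
  is_hom f /\ bijective f.

Definition is_subspace (V : lmodType F) (U : V -> Prop) : Prop :=
  [/\ U 0, forall x y, U x -> U y -> U (x + y) & forall (a : F) x, U x -> U (a *: x)].

Definition is_ginv_subspace (V : gmod) (U : V -> Prop) : Prop :=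
  is_subspace U /\ forall (x : g) (u : V), U u -> U (gm_act x u).

Definition is_direct_sum (V W S : gmod)
  (i1 : V -> S) (i2 : W -> S) (p1 : S -> V) (p2 : S -> W) : Prop :=
  [/\ is_hom i1 /\ is_hom i2, is_hom p1 /\ is_hom p2,
      (forall v, p1 (i1 v) = v) /\ (forall w, p2 (i2 w) = w),
      (forall w, p1 (i2 w) = 0) /\ (forall v, p2 (i1 v) = 0) &
      forall s, i1 (p1 s) + i2 (p2 s) = s].

Definition is_tensor (V W T : gmod) (b : V -> W -> T) : Prop :=
  [/\ forall w, is_lin (fun v => b v w),
      forall v, is_lin (b v),
      (forall (Z : lmodType F) (beta : V -> W -> Z),
          (forall w, is_lin (fun v => beta v w)) -> (forall v, is_lin (beta v)) ->
          (exists f : T -> Z, is_lin f /\ forall v w, f (b v w) = beta v w) /\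
          (forall f1 f2 : T -> Z, is_lin f1 -> is_lin f2 ->
             (forall v w, f1 (b v w) = beta v w) ->
             (forall v w, f2 (b v w) = beta v w) -> forall t, f1 t = f2 t)) &
      forall (x : g) v w, gm_act x (b v w) = b (gm_act x v) w + b v (gm_act x w)].

Definition is_one_dim_trivial (V : gmod) : Prop :=
  (exists e : V, e <> 0 /\ forall v : V, exists a : F, v = a *: e) /\
  (forall (x : g) (v : V), gm_act x v = 0).

(* the standing assumptions on the category C (given as a class of objects;
   it is a full subcategory, so morphisms are all g-module morphisms) *)
Definition is_good_category (C : gmod -> Prop) : Prop :=
  [/\
      (forall (V W : gmod) (f : V -> W), C V -> is_iso f -> C W) /\
      (forall (V : gmod) (U : V -> Prop) (W : gmod) (f : W -> V),
          C V -> is_ginv_subspace U -> is_hom f -> injective f ->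
          (forall v, U v <-> exists w, f w = v) -> C W),
      (forall V W : gmod, C V -> C W ->
          exists (S : gmod) i1 i2 p1 p2, C S /\ @is_direct_sum V W S i1 i2 p1 p2),
      (forall V W : gmod, C V -> C W ->
          exists (T : gmod) (b : V -> W -> T), C T /\ is_tensor b),
      (exists V0 : gmod, C V0 /\ is_one_dim_trivial V0) &
      (forall x : g, (forall V : gmod, C V -> forall v : V, gm_act x v = 0) -> x = 0)].

(* a category of duals: du V is the subspace V^du of V^* *)
Definition is_category_of_duals (C : gmod -> Prop)
  (du : forall V : gmod, (V -> F) -> Prop) : Prop :=
  [/\
      (forall V : gmod, C V ->
         (forall phi, du V phi -> is_functional phi) /\
         du V (fun _ => 0) /\
         (forall phi psi, du V phi -> du V psi -> du V (fun v => phi v + psi v)) /\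
         (forall (a : F) phi, du V phi -> du V (fun v => a * phi v))) /\
      (forall V : gmod, C V -> forall v : V, v <> 0 -> exists phi, du V phi /\ phi v <> 0),
      (forall V : gmod, C V -> forall (x : g) phi, du V phi -> du V (fun v => phi (gm_act x v))),
      (forall (V W : gmod) (alpha : V -> W), C V -> C W -> is_hom alpha ->
          forall psi, du W psi -> du V (fun v => psi (alpha v))),
      (forall (V W S : gmod) i1 i2 p1 p2, C V -> C W -> C S ->
          @is_direct_sum V W S i1 i2 p1 p2 ->
          forall phi : S -> F, du S phi <->
            [/\ is_functional phi, du V (fun v => phi (i1 v)) & du W (fun w => phi (i2 w))]) &
      (forall (V W T : gmod) (b : V -> W -> T), C V -> C W -> C T -> is_tensor b ->
          forall phi psi (chi : T -> F), du V phi -> du W psi -> is_functional chi ->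
          (forall v w, chi (b v w) = phi v * psi w) -> du T chi)].

Definition End_du (du : forall V : gmod, (V -> F) -> Prop) (V : gmod) (f : V -> V) : Prop :=
  is_lin f /\ forall phi, du V phi -> du V (fun v => phi (f v)).

Definition in_Nat (C : gmod -> Prop) (du : forall V : gmod, (V -> F) -> Prop)
  (m : forall V : gmod, V -> V) : Prop :=
  (forall V : gmod, C V -> End_du du (m V)) /\
  (forall (V W : gmod) (f : V -> W), C V -> C W -> is_hom f ->
     forall v, f (m V v) = m W (f v)).

Definition in_Tannaka_monoid (C : gmod -> Prop) (du : forall V : gmod, (V -> F) -> Prop)
  (m : forall V : gmod, V -> V) : Prop :=
  [/\ in_Nat C du m,
      (forall (V W T : gmod) (b : V -> W -> T), C V -> C W -> C T -> is_tensor b ->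
         forall v w, m T (b v w) = b (m V v) (m W w)) &
      (forall V0 : gmod, C V0 -> is_one_dim_trivial V0 -> forall v, m V0 v = v)].

End Defs.

(** The g-invariant subspace U is itself a g-module and hence, by closure of
    C under submodules, an object of C whose inclusion into V is a morphism.
    Naturality of m along this inclusion gives m_V u = m_U u for u in U, and
    m_U u lies in U. *)
From HB Require Import structures.
From mathcomp Require Import all_boot all_order all_algebra.
From mathcomp Require Import boolp.
Set Implicit Arguments. Unset Strict Implicit. Unset Printing Implicit Defensive.
Local Open Scope ring_scope.

Section GinvSubmodule.
Variables (F : fieldType) (g : lmodType F) (br : g -> g -> g) (V : gModule br).
Variables (U : V -> Prop) (hU : is_ginv_subspace U).

Definition ginv_pred : {pred V} := fun v => `[< U v >].

Lemma ginv_predP v : v \in ginv_pred <-> U v.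
Proof. by rewrite unfold_in /ginv_pred; split => /asboolP. Qed.

Lemma ginv_pred_submod_closed : subsemimod_closed ginv_pred.
Proof.
case: hU => [[U0 UD UZ] _]; split; first split.
- exact/ginv_predP.
- by move=> x y /ginv_predP Ux /ginv_predP Uy; apply/ginv_predP/UD.
- by move=> a x /ginv_predP Ux; apply/ginv_predP/UZ.
Qed.

HB.instance Definition _ :=
  GRing.isSubmodClosed.Build F V ginv_pred ginv_pred_submod_closed.

Record ginv_sub := GinvSub { ginv_val :> V; _ : ginv_val \in ginv_pred }.
HB.instance Definition _ := [isSub for ginv_val].
HB.instance Definition _ := [Choice of ginv_sub by <:].
HB.instance Definition _ := [SubChoice_isSubLmodule of ginv_sub by <:].

Lemma ginv_act_subproof (x : g) (w : ginv_sub) : gm_act x (ginv_val w) \in ginv_pred.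
Proof. by case: w => v /ginv_predP Uv /=; apply/ginv_predP; case: hU => _; apply. Qed.

Definition ginv_act (x : g) (w : ginv_sub) : ginv_sub := GinvSub (ginv_act_subproof x w).

Lemma ginv_act_lin_g w : is_lin (fun x => ginv_act x w).
Proof. by move=> a x y; apply: val_inj; apply: gm_act_lin_g. Qed.

Lemma ginv_act_lin_v x : is_lin (ginv_act x).
Proof. by move=> a v w; apply: val_inj; apply: gm_act_lin_v. Qed.

Lemma ginv_act_br x y w :
  ginv_act (br x y) w = ginv_act x (ginv_act y w) - ginv_act y (ginv_act x w).
Proof. by apply: val_inj; apply: gm_act_br. Qed.

Definition ginv_submodule : gModule br :=
  GModule ginv_act_lin_g ginv_act_lin_v ginv_act_br.

Lemma ginv_val_hom : is_hom (ginv_val : ginv_submodule -> V).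
Proof. by []. Qed.

Lemma ginv_val_image v : U v <-> exists w : ginv_submodule, ginv_val w = v.
Proof.
split; first by move=> /ginv_predP Uv; exists (GinvSub Uv).
by case=> [[w /ginv_predP Uw]] /= <-.
Qed.

End GinvSubmodule.

Lemma natural_ginv_subspace_stable (F : fieldType) (g : lmodType F)
  (br : g -> g -> g) (C : gModule br -> Prop)
  (hsub : forall (V : gModule br) (U : V -> Prop) (W : gModule br) (f : W -> V),
      C V -> is_ginv_subspace U -> is_hom f -> injective f ->
      (forall v, U v <-> exists w, f w = v) -> C W)
  (m : forall W : gModule br, W -> W)
  (hnat : forall (V W : gModule br) (f : V -> W), C V -> C W -> is_hom f ->
      forall v, f (m V v) = m W (f v))
  (V : gModule br) (hV : C V) (U : V -> Prop) (hU : is_ginv_subspace U) :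
  forall u : V, U u -> U (m V u).
Proof.
have CU : C (ginv_submodule hU).
  exact: (hsub V U (ginv_submodule hU) (@ginv_val _ _ _ _ _) hV hU
           (ginv_val_hom hU) val_inj (ginv_val_image hU)).
move=> _ /(ginv_val_image hU) [w <-].
rewrite -(hnat _ _ _ CU hV (ginv_val_hom hU)).
by apply/(ginv_val_image hU); exists (m _ w).
Qed.

Theorem proposition2p8
  (F : fieldType) (hchar : [pchar F]%R =i pred0)
  (g : lmodType F) (br : g -> g -> g) (hlie : is_lie_bracket br)
  (C : gModule br -> Prop) (hC : is_good_category C)
  (du : forall V : gModule br, (V -> F) -> Prop) (hdu : is_category_of_duals C du)
  (V : gModule br) (hV : C V)
  (U : V -> Prop) (hU : is_ginv_subspace U)
  (m : forall W : gModule br, W -> W) (hm : in_Tannaka_monoid C du m) :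
  forall u : V, U u -> U (m V u).
Proof.
case: hC => [[_ hsub] _ _ _ _]; case: hm => [[_ hnat] _ _].
exact: natural_ginv_subspace_stable hsub m hnat V hV U hU.
Qed.
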